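(* The Top-$t$ Truncated Harmonic rule has utilitarian distortion $O\!\left(\frac{m\sqrt m\,H_t}{t}\right)$.
   Context: Setting: $n$ agents, $m$ alternatives, $1\le t\le m$; each agent has an underlying strict ranking but only her ordered top-$t$ list is reported (top-$t$ profile $\vec\sigma_t$); $r_i(Y)\in\{1,\dots,t\}$ is the reported rank of $Y$ when $Y$ is among $i$'s top $t$; $H_t=\sum_{k=1}^t1/k$. For the reported information, $Y\succ_i\hat X$ holds when $Y$ is among $i$'s top $t$ and either $\hat X$ is not among them or $r_i(Y)<r_i(\hat X)$. Utilitarian framework: $u_i:\mathcal A\to\mathbb R_{\ge0}$ with $\sum_Xu_i(X)=1$; $\vec u$ is consistent with $\vec\sigma_t$ if for some full ranking profile whose top-$t$ prefixes agree with $\vec\sigma_t$, $X\succ_iY\Rightarrow u_i(X)\ge u_i(Y)$. $\mathrm{SW}(X,\vec u)=\sum_iu_i(X)$; utilitarian distortion of $f$: $\sup_{\vec\sigma_t}\sup_{\vec u}\max_X\mathrm{SW}(X,\vec u)/\mathbb E_{X\sim f(\vec\sigma_t)}[\mathrm{SW}(X,\vec u)]$. Top-$t$ Truncated Harmonic rule: fix a deterministic voting rule $g$ on top-$t$ profiles with metric distortion at most $6m/t+1$ (such a rule exists), and let $\hat X=g(\vec\sigma_t)$. Pick an agent $i$ uniformly at random and output $Y$ with probability $p(i,Y)=\frac{1}{2H_t r_i(Y)}$ if $Y\succ_i\hat X$, $p(i,\hat X)=1-\sum_{Y\succ_i\hat X}p(i,Y)$, and $p(i,Y)=0$ otherwise.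 *)

From HB Require Import structures.
From mathcomp Require Import all_boot all_order all_algebra all_fingroup.
Set Implicit Arguments. Unset Strict Implicit. Unset Printing Implicit Defensive.
Import Order.TTheory GRing.Theory Num.Theory.
Local Open Scope ring_scope.

(* Agents are 'I_n, alternatives are 'I_m.
   A top-t list is an (injective) map from positions 'I_t (0-based) to alternatives. *)
Definition topt_list (m t : nat) := {ffun 'I_t -> 'I_m}.
Definition topt_profile (n m t : nat) := {ffun 'I_n -> {ffun 'I_t -> 'I_m}}.

Definition valid_topt n m t (s : topt_profile n m t) : Prop :=
  forall i : 'I_n, injective (s i).

Definition in_top m t (l : {ffun 'I_t -> 'I_m}) (Y : 'I_m) : bool := Y \in codom l.
(* 0-based reported position; the reported rank r_i(Y) is tpos + 1 *)
Definition tpos m t (l : {ffun 'I_t -> 'I_m}) (Y : 'I_m) : nat := index Y (codom l).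
Definition trank m t (l : {ffun 'I_t -> 'I_m}) (Y : 'I_m) : nat := (tpos l Y).+1.

Definition rep_pref m t (l : {ffun 'I_t -> 'I_m}) (Y X : 'I_m) : bool :=
  in_top l Y && (~~ in_top l X || (tpos l Y < tpos l X)%N).

(* Full ranking profile: pi i k = the alternative at (0-based) position k of agent i. *)
Definition full_profile (n m : nat) := 'I_n -> {perm 'I_m}.
Definition fpos m (p : {perm 'I_m}) (X : 'I_m) : nat := val ((p^-1)%g X).

Definition extends n m t (s : topt_profile n m t) (pi : full_profile n m) : Prop :=
  forall (i : 'I_n) (k : 'I_t), fpos (pi i) (s i k) = val k.

Definition harm {R : numFieldType} (t : nat) : R := \sum_(k < t) (k.+1)%:R^-1.

Definition is_utility {R : numFieldType} n m (u : 'I_n -> 'I_m -> R) : Prop :=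
  forall i, (forall X, 0 <= u i X) /\ \sum_(X < m) u i X = 1.

Definition util_consistent {R : numFieldType} n m t (s : topt_profile n m t)
    (u : 'I_n -> 'I_m -> R) : Prop :=
  exists pi : full_profile n m, extends s pi /\
    forall i X Y, (fpos (pi i) X < fpos (pi i) Y)%N -> u i Y <= u i X.

Definition SW {R : numFieldType} n m (u : 'I_n -> 'I_m -> R) (X : 'I_m) : R :=
  \sum_(i < n) u i X.

Definition is_metric {R : numFieldType} n m (d : 'I_n + 'I_m -> 'I_n + 'I_m -> R) : Prop :=
  (forall x, d x x = 0) /\ (forall x y, 0 <= d x y) /\ (forall x y, d x y = d y x) /\
  (forall x y z, d x z <= d x y + d y z).

Definition metric_consistent {R : numFieldType} n m t (s : topt_profile n m t)
    (d : 'I_n + 'I_m -> 'I_n + 'I_m -> R) : Prop :=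
  exists pi : full_profile n m, extends s pi /\
    forall i X Y, (fpos (pi i) X < fpos (pi i) Y)%N -> d (inl i) (inr X) <= d (inl i) (inr Y).

Definition SC {R : numFieldType} n m (d : 'I_n + 'I_m -> 'I_n + 'I_m -> R) (X : 'I_m) : R :=
  \sum_(i < n) d (inl i) (inr X).

Definition metric_distortion_le {R : numFieldType} n m t
    (g : topt_profile n m t -> 'I_m) (D : R) : Prop :=
  forall s, valid_topt s -> forall d, is_metric d -> metric_consistent s d ->
    forall X, SC d (g s) <= D * SC d X.

(* p(i, Y) for reported list l and the g-winner Xh *)
Definition tth_p {R : numFieldType} m t (l : {ffun 'I_t -> 'I_m}) (Xh Y : 'I_m) : R :=
  if rep_pref l Y Xh then (2 * harm t * (trank l Y)%:R)^-1
  else if Y == Xh then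
    1 - \sum_(Z < m | rep_pref l Z Xh) (2 * harm t * (trank l Z)%:R)^-1
  else 0.

(* probability that the rule outputs Y: uniform agent, then p(i, Y) *)
Definition tth {R : numFieldType} n m t (g : topt_profile n m t -> 'I_m)
    (s : topt_profile n m t) (Y : 'I_m) : R :=
  n%:R^-1 * \sum_(i < n) tth_p (s i) (g s) Y.

Definition expected_SW {R : numFieldType} n m t (g : topt_profile n m t -> 'I_m)
    (s : topt_profile n m t) (u : 'I_n -> 'I_m -> R) : R :=
  \sum_(Y < m) tth g s Y * SW u Y.

From HB Require Import structures.
From mathcomp Require Import all_boot all_order all_algebra all_fingroup.
From mathcomp Require Import ring lra.
Set Implicit Arguments. Unset Strict Implicit. Unset Printing Implicit Defensive.
Import Order.TTheory GRing.Theory Num.Theory.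
Local Open Scope ring_scope.

(* Fix a full ranking profile pi extending the reported lists and consistent with
   the utilities u, and let Xh be the winner of the deterministic rule.  Agent i draws Y with probability q_i(Y) = 1/(2 H_t (pos Y + 1)) when
   she reports Y above Xh (pos Y < c_i := min(t, pos Xh)), and Xh otherwise, so
   q_i(Xh) >= 1/2.  Let E be the expected welfare and K = m sqrt(m) H_t E.
   - Per agent (sections RankedUtility, TruncatedHarmonicAgent): u_i(Y) <= 1/(pos Y+1)
     <= 2 H_t q_i(Y) above the cutoff, the favourite gets utility >= 1/m and
     probability >= 1/(2 H_t), and t <= 2m (mass above c_i) + 2mt u_i(Xh).
   - Aggregate (section Aggregate): SW(Xh) <= 2E; a weighted Cauchy-Schwarz
     inequality bounds the mass M above the cutoffs (M^2 <= 2 H_t n m E) and the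
     number of agents (n <= 2 H_t m^2 E, and n t^2 <= 32 H_t m^3 E).
   - For any X, the agents split into those ranking X below Xh, above their
     cutoff, and above Xh outside their top t; their contributions to SW(X) are
     at most 2K/t, 8K/t and 2K/t, whence SW(X) <= 12 K / t. *)

(* Cauchy-Schwarz for a finite sum: (sum x)^2 <= k * sum x^2, obtained from
   the nonnegativity of sum_{Y,Z} (x Y - x Z)^2 = 2 (k * sum x^2 - (sum x)^2). *)
Lemma sqr_sum_le (R : realFieldType) (k : nat) (x : 'I_k -> R) :
  (\sum_(Y < k) x Y) ^+ 2 <= k%:R * \sum_(Y < k) x Y ^+ 2.
Proof.
set S := \sum_(Y < k) x Y; set Q := \sum_(Y < k) x Y ^+ 2.
have row Y : \sum_(Z < k) (x Y - x Z) ^+ 2 = k%:R * x Y ^+ 2 - 2 * x Y * S + Q.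
  under eq_bigr do rewrite sqrrB.
  rewrite big_split /= sumrB sumr_const card_ord mulr_natl /S mulr_sumr.
  by congr (_ - _ + _); apply: eq_bigr => Z _; rewrite mulr2n; ring.
have spread : 0 <= \sum_(Y < k) \sum_(Z < k) (x Y - x Z) ^+ 2.
  by apply: sumr_ge0 => Y _; apply: sumr_ge0 => Z _; apply: sqr_ge0.
rewrite (eq_bigr _ (fun Y _ => row Y)) big_split /= sumrB sumr_const card_ord in spread.
rewrite -mulr_sumr -mulr_suml -mulr_sumr -/S -/Q -mulr_natl in spread.
by rewrite expr2; nra.
Qed.

Lemma harm_ge1 (R : numFieldType) (t : nat) : (1 <= t)%N -> 1 <= harm t :> R.
Proof.
case: t => // t _; rewrite /harm big_ord_recl /= invr1 lerDl.
by apply: sumr_ge0 => k _; rewrite invr_ge0.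
Qed.

Lemma harm_gt0 (R : numFieldType) (t : nat) : (0 < t)%N -> 0 < harm t :> R.
Proof. by move=> t_gt0; apply: lt_le_trans ltr01 (harm_ge1 _ t_gt0). Qed.

Section RankedUtility.
Variables (R : realFieldType) (m : nat) (p : {perm 'I_m}).

Lemma fpos_inj : injective (fpos p).
Proof. by move=> Y Z /val_inj; apply: perm_inj. Qed.

Lemma fpos_perm (j : 'I_m) : fpos p (p j) = j.
Proof. by rewrite /fpos permK. Qed.

Lemma sum_fpos_lt (k : nat) (F : nat -> R) : (k <= m)%N ->
  \sum_(Y < m | (fpos p Y < k)%N) F (fpos p Y) = \sum_(j < k) F j.
Proof.
move=> le_km; rewrite (reindex_inj (@perm_inj _ p)) /=.
under eq_bigl do rewrite fpos_perm.
under eq_bigr do rewrite fpos_perm.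
by rewrite (big_ord_widen _ _ le_km).
Qed.

Lemma sum_const_fpos_lt (k : nat) (c : R) : (k <= m)%N ->
  \sum_(Y < m | (fpos p Y < k)%N) c = k%:R * c.
Proof.
by move=> le_km; rewrite (@sum_fpos_lt k (fun=> c) le_km) sumr_const card_ord mulr_natl.
Qed.

Lemma sum_const_le (P : pred 'I_m) (c : R) : 0 <= c -> \sum_(Y < m | P Y) c <= m%:R * c.
Proof.
move=> c_ge0; rewrite sumr_const -[c *+ _]mulr_natl ler_wpM2r // ler_nat.
by apply: leq_trans (max_card _) _; rewrite card_ord.
Qed.

Variable v : 'I_m -> R.
Hypothesis v_ge0 : forall X, 0 <= v X.
Hypothesis v_sum1 : \sum_(X < m) v X = 1.
Hypothesis v_mono : forall X Y, (fpos p X < fpos p Y)%N -> v Y <= v X.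

Lemma v_antitone X Y : (fpos p X <= fpos p Y)%N -> v Y <= v X.
Proof.
by rewrite leq_eqVlt => /orP[/eqP/fpos_inj->|]; [apply: lexx | apply: v_mono].
Qed.

Lemma v_partial_le1 (P : pred 'I_m) : \sum_(X < m | P X) v X <= 1.
Proof.
rewrite -v_sum1 [X in _ <= X](bigID P) /= lerDl.
by apply: sumr_ge0 => X _; apply: v_ge0.
Qed.

(* The alternative in position j has utility at most 1 / (j + 1): the j + 1
   alternatives ranked weakly above it have at least its utility. *)
Lemma v_le_inv_rank Y : v Y <= ((fpos p Y).+1%:R)^-1.
Proof.
set k := (fpos p Y).+1.
have above : k%:R * v Y <= 1.
  rewrite -(@sum_const_fpos_lt k (v Y) (ltn_ord _)); apply: le_trans (v_partial_le1 _).
  by apply: ler_sum => Z; rewrite ltnS; apply: v_antitone.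
by rewrite -div1r ler_pdivlMr ?ltr0n // mulrC.
Qed.

Lemma v_first_ge Y : fpos p Y = 0%N -> m%:R^-1 <= v Y.
Proof.
move=> top; have m_gt0 : (0 < m)%N := leq_ltn_trans (leq0n Y) (ltn_ord Y).
have all_below : \sum_(X < m) v X <= \sum_(X < m) v Y.
  by apply: ler_sum => X _; apply: v_antitone; rewrite top.
rewrite v_sum1 sumr_const card_ord -mulr_natl in all_below.
by rewrite -div1r ler_pdivrMr ?ltr0n // mulrC.
Qed.

Definition mass_above (k : nat) : R := \sum_(Y < m | (fpos p Y < k)%N) v Y.

Lemma mass_above_ge0 k : 0 <= mass_above k.
Proof. by apply: sumr_ge0 => Y _; apply: v_ge0. Qed.

Lemma mass_above_ge k X : (k <= m)%N -> (k <= fpos p X)%N ->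
  k%:R * v X <= mass_above k.
Proof.
move=> le_km le_kX; rewrite -sum_const_fpos_lt //.
by apply: ler_sum => Y lt_Yk; apply: v_antitone; apply: ltnW (leq_trans lt_Yk le_kX).
Qed.

(* Either the winner Xh sits in the top t (and whatever lies below it carries
   at most m * v Xh), or the top t carry a constant fraction t/m of the total
   utility; in both cases the mass above min(t, pos Xh) controls t. *)
Lemma mass_above_cutoff (t : nat) (Xh : 'I_m) : (t <= m)%N ->
  t%:R <= 2 * m%:R * mass_above (minn t (fpos p Xh)) + 2 * m%:R * t%:R * v Xh.
Proof.
move=> le_tm; set k := minn t (fpos p Xh); set P := mass_above k.
have split1 : P + \sum_(Y < m | ~~ (fpos p Y < k)%N) v Y = 1.
  by rewrite -v_sum1 [RHS](bigID (fun Y => (fpos p Y < k)%N)).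
set rest := \sum_(Y < m | _) _ in split1.
have tm : (t%:R : R) <= m%:R by rewrite ler_nat.
have P0 := mass_above_ge0 k; have vX0 := v_ge0 Xh.
case: (ltnP (fpos p Xh) t) => [lt_Xt|le_tX].
  have rest_le : rest <= m%:R * v Xh.
    rewrite /rest; apply: (le_trans _ (sum_const_le _ vX0)); apply: ler_sum => Y.
    by rewrite -leqNgt /k (minn_idPr (ltnW lt_Xt)); apply: v_antitone.
  have t0 : (0 : R) <= t%:R by rewrite ler0n.
  have : t%:R * rest <= t%:R * (m%:R * v Xh) by apply: ler_wpM2l.
  have : t%:R * P <= m%:R * P by apply: ler_wpM2r.
  by nra.
have k_t : k = t by apply/minn_idPl.
have rest_le : t%:R * rest <= m%:R * P.
  rewrite /rest mulr_sumr; apply: (le_trans _ (sum_const_le _ P0)); apply: ler_sum => Y.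
  by rewrite -leqNgt k_t => le_tY; rewrite mass_above_ge.
have : t%:R * P <= m%:R * P by apply: ler_wpM2r.
have : 0 <= m%:R * t%:R * v Xh by rewrite !mulr_ge0 ?ler0n.
by nra.
Qed.

End RankedUtility.

Lemma sum_ord_prefix_le (R : numDomainType) (c t : nat) (F : nat -> R) :
  (c <= t)%N -> (forall j, 0 <= F j) -> \sum_(j < c) F j <= \sum_(j < t) F j.
Proof.
move=> le_ct F_ge0; rewrite (big_ord_widen t F le_ct).
rewrite [X in _ <= X](bigID (fun j : 'I_t => (j < c)%N)) /= lerDl.
by apply: sumr_ge0 => j _.
Qed.

(* Agent's cutoff: the alternatives she reports above the winner Xh are
   exactly those in positions < min(t, pos Xh) of any extension of her list. *)
Definition cutoff {m : nat} (t : nat) (p : {perm 'I_m}) (Xh : 'I_m) : nat := minn t (fpos p Xh).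

Section TruncatedHarmonicAgent.
Variables (R : realFieldType) (m t : nat) (l : {ffun 'I_t -> 'I_m}) (p : {perm 'I_m}).
Variable Xh : 'I_m.
Hypothesis l_inj : injective l.
Hypothesis l_prefix : forall k, fpos p (l k) = k.
Hypothesis t_gt0 : (0 < t)%N.

Let c := cutoff t p Xh.
Let H : R := harm t.

Lemma in_top_fpos Y : in_top l Y = (fpos p Y < t)%N.
Proof.
apply/codomP/idP => [[k ->]|lt_Yt]; first by rewrite l_prefix.
by exists (Ordinal lt_Yt); apply: (@fpos_inj _ p); rewrite l_prefix.
Qed.

Lemma tpos_fpos Y : (fpos p Y < t)%N -> tpos l Y = fpos p Y.
Proof.
move=> lt_Yt; have -> : Y = l (Ordinal lt_Yt) by apply: (@fpos_inj _ p); rewrite l_prefix.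
by rewrite /tpos codomE index_map // index_enum_ord l_prefix.
Qed.

Lemma rep_pref_fpos Y : rep_pref l Y Xh = (fpos p Y < c)%N.
Proof.
rewrite /rep_pref !in_top_fpos /c /cutoff leq_min.
case: (ltnP (fpos p Y) t) => //= lt_Yt.
case: (ltnP (fpos p Xh) t) => /= [lt_Xt|le_tX]; first by rewrite !tpos_fpos.
by rewrite (leq_trans lt_Yt le_tX).
Qed.

Lemma trank_fpos Y : (fpos p Y < c)%N -> trank l Y = (fpos p Y).+1.
Proof.
by move=> lt_Yc; rewrite /trank tpos_fpos // (leq_trans lt_Yc) ?geq_minl.
Qed.

Lemma tth_p_pref Y : (fpos p Y < c)%N -> 2 * H * tth_p l Xh Y = ((fpos p Y).+1%:R)^-1.
Proof.
move=> lt_Yc; rewrite /tth_p rep_pref_fpos lt_Yc trank_fpos // invfM mulrA.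
by rewrite mulfV ?mul1r // gt_eqF // mulr_gt0 ?(harm_gt0 _ t_gt0).
Qed.

(* The winner keeps probability at least 1/2, since the preferred alternatives
   together receive at most H_t / (2 H_t). *)
Lemma tth_p_winner : 1 / 2 <= tth_p l Xh Xh :> R.
Proof.
have not_pref : rep_pref l Xh Xh = false by rewrite rep_pref_fpos ltnNge geq_minr.
rewrite /tth_p not_pref eqxx.
set F := fun j : nat => (2 * H * j.+1%:R)^-1.
have F_ge0 j : 0 <= F j by rewrite invr_ge0 !mulr_ge0 ?ler0n // ltW // (harm_gt0 _ t_gt0).
have -> : \sum_(Z < m | rep_pref l Z Xh) (2 * H * (trank l Z)%:R)^-1
    = \sum_(Z < m | (fpos p Z < c)%N) F (fpos p Z).
  apply: eq_big => [Z|Z pref]; first exact: rep_pref_fpos.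
  by rewrite trank_fpos // -rep_pref_fpos.
have le_cm : (c <= m)%N := leq_trans (geq_minr t (fpos p Xh)) (ltnW (ltn_ord _)).
rewrite sum_fpos_lt //.
have half : \sum_(j < t) F j = 1 / 2.
  rewrite /F; under eq_bigr do rewrite invfM.
  by rewrite -mulr_sumr /H /harm -/(harm t) invfM divfK ?gt_eqF ?(harm_gt0 _ t_gt0) ?div1r.
have := sum_ord_prefix_le (geq_minl t (fpos p Xh)) F_ge0; rewrite half.
by lra.
Qed.

Lemma tth_p_ge0 Y : 0 <= tth_p l Xh Y :> R.
Proof.
have [->|ne_YX] := eqVneq Y Xh; first by apply: le_trans tth_p_winner; rewrite divr_ge0.
rewrite /tth_p (negbTE ne_YX); case: ifP => // _.
by rewrite invr_ge0 !mulr_ge0 ?ler0n // ltW // (harm_gt0 _ t_gt0).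
Qed.

Lemma tth_p_first Y : fpos p Y = 0%N -> 1 <= 2 * H * tth_p l Xh Y.
Proof.
move=> top; have H1 : 1 <= H by apply: harm_ge1.
have [->|ne_YX] := eqVneq Y Xh; first by have := tth_p_winner; nra.
have lt_Yc : (fpos p Y < c)%N.
  rewrite top /c /cutoff leq_min t_gt0 lt0n; apply: contra ne_YX => /eqP X0.
  by apply/eqP/(@fpos_inj _ p); rewrite top X0.
by rewrite tth_p_pref // top invr1.
Qed.

End TruncatedHarmonicAgent.

Section Aggregate.
Local Unset Implicit Arguments.
Variables (R : rcfType) (n m t : nat).
Hypotheses (n_gt0 : (0 < n)%N) (t_gt0 : (0 < t)%N) (le_tm : (t <= m)%N).
Variable s : topt_profile n m t.
Hypothesis s_valid : valid_topt s.
Variable u : 'I_n -> 'I_m -> R.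
Hypothesis u_utility : is_utility u.
Variable pi : full_profile n m.
Hypothesis pi_ext : extends s pi.
Hypothesis u_mono : forall i X Y, (fpos (pi i) X < fpos (pi i) Y)%N -> u i Y <= u i X.
Variable Xh : 'I_m.

Let H : R := harm t.
Let q i Y : R := tth_p (s i) Xh Y.
Let c i := cutoff t (pi i) Xh.
Let E : R := \sum_(Y < m) (n%:R^-1 * \sum_(i < n) q i Y) * SW u Y.
Let M : R := \sum_(i < n) mass_above (pi i) (u i) (c i).

Lemma H_ge1 : 1 <= H. Proof. exact: harm_ge1. Qed.

Lemma H_gt0 : 0 < H. Proof. exact: harm_gt0. Qed.

Lemma u_ge0 i X : 0 <= u i X. Proof. by case: (u_utility i). Qed.

Lemma u_sum1 i : \sum_(X < m) u i X = 1. Proof. by case: (u_utility i). Qed.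

Lemma q_ge0 i Y : 0 <= q i Y.
Proof. exact: (tth_p_ge0 R Xh (@s_valid i) (pi_ext i) t_gt0). Qed.

Lemma Hq_ge0 i Y : 0 <= 2 * H * q i Y.
Proof. by rewrite !mulr_ge0 ?q_ge0 // ltW // H_gt0. Qed.

Lemma u_le_Hq i Y : (fpos (pi i) Y < c i)%N -> u i Y <= 2 * H * q i Y.
Proof.
move=> lt_Yc; rewrite /q (tth_p_pref R (@s_valid i) (pi_ext i) t_gt0 lt_Yc).
exact: v_le_inv_rank (u_ge0 i) (u_sum1 i) (u_mono i) Y.
Qed.

Lemma SW_ge0 Y : 0 <= SW u Y.
Proof. by apply: sumr_ge0 => i _; apply: u_ge0. Qed.

Lemma mass_ge0 i : 0 <= mass_above (pi i) (u i) (c i).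
Proof. by apply: mass_above_ge0; apply: u_ge0. Qed.

Lemma nE : n%:R * E = \sum_(Y < m) (\sum_(i < n) q i Y) * SW u Y.
Proof.
rewrite /E mulr_sumr; apply: eq_bigr => Y _.
by rewrite !mulrA mulfV ?mul1r // pnatr_eq0 -lt0n.
Qed.

Lemma weighted_SW_le Y : (\sum_(i < n) q i Y) * SW u Y <= n%:R * E.
Proof.
rewrite nE (bigD1 Y) //= lerDl; apply: sumr_ge0 => Z _.
by rewrite mulr_ge0 ?SW_ge0 // sumr_ge0 // => i _; apply: q_ge0.
Qed.

Lemma E_ge0 : 0 <= E.
Proof.
apply: sumr_ge0 => Y _; rewrite !mulr_ge0 ?invr_ge0 ?ler0n ?SW_ge0 //.
by apply: sumr_ge0 => i _; apply: q_ge0.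
Qed.

(* The winner is output with probability at least 1/2. *)
Lemma winner_SW_le : SW u Xh <= 2 * E.
Proof.
have half : n%:R * (1 / 2) <= \sum_(i < n) q i Xh.
  have -> : n%:R * (1 / 2) = \sum_(i < n) (1 / 2 : R).
    by rewrite sumr_const card_ord mulr_natl.
  apply: ler_sum => i _.
  exact: (tth_p_winner R Xh (@s_valid i) (pi_ext i) t_gt0).
have := le_trans (ler_wpM2r (SW_ge0 Xh) half) (weighted_SW_le Xh).
have : (0 : R) < n%:R by rewrite ltr0n.
by nra.
Qed.

Lemma sqr_mass_le (lam : R) (b : 'I_n -> 'I_m -> R) : 0 <= lam ->
  (forall i Y, 0 <= b i Y) -> (forall i Y, b i Y <= u i Y) ->
  (forall i Y, lam * b i Y <= 2 * H * q i Y) ->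
  lam * (\sum_(i < n) \sum_(Y < m) b i Y) ^+ 2 <= 2 * H * n%:R * m%:R * E.
Proof.
move=> lam_ge0 b_ge0 b_le_u b_le_q.
set S := fun Y => \sum_(i < n) b i Y.
have S_ge0 Y : 0 <= S Y by apply: sumr_ge0.
have per_alt : lam * \sum_(Y < m) S Y ^+ 2 <= 2 * H * (n%:R * E).
  rewrite nE mulr_sumr (mulr_sumr _ _ _ (2 * H)); apply: ler_sum => Y _.
  rewrite expr2 !mulrA; apply: ler_pM; rewrite ?mulr_ge0 //; last by apply: ler_sum => i _.
  by rewrite /S mulr_sumr (mulr_sumr _ _ _ (2 * H)); apply: ler_sum => i _.
have := ler_wpM2l lam_ge0 (sqr_sum_le S); rewrite exchange_big /=.
move/le_trans; apply; rewrite mulrCA.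
have -> : 2 * H * n%:R * m%:R * E = m%:R * (2 * H * (n%:R * E)) by ring.
by apply: ler_wpM2l; rewrite ?ler0n.
Qed.

(* Agents ranking X above their cutoff contribute at most 2 H_t sum_i q i X to X,
   and (sum_i q i X) SW(X) is one term of n E. *)
Lemma preferred_SW_le X :
  (\sum_(i < n | (fpos (pi i) X < c i)%N) u i X) * SW u X <= 2 * H * n%:R * E.
Proof.
have dom : \sum_(i < n | (fpos (pi i) X < c i)%N) u i X <= 2 * H * \sum_(i < n) q i X.
  rewrite mulr_sumr [X in _ <= X](bigID (fun i => (fpos (pi i) X < c i)%N)) /=.
  rewrite -[X in X <= _]addr0 lerD //; first by apply: ler_sum => i; apply: u_le_Hq.
  by apply: sumr_ge0 => i _; apply: Hq_ge0.
apply: le_trans (ler_wpM2r (SW_ge0 X) dom) _.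
by rewrite -!mulrA !ler_pM2l ?H_gt0 // weighted_SW_le.
Qed.

Lemma sqr_prefix_mass_le : M ^+ 2 <= 2 * H * n%:R * m%:R * E.
Proof.
set b := fun i Y => if (fpos (pi i) Y < c i)%N then u i Y else 0.
have -> : M = \sum_(i < n) \sum_(Y < m) b i Y.
  by apply: eq_bigr => i _; rewrite /mass_above big_mkcond.
rewrite -[X in X <= _]mul1r; apply: sqr_mass_le => // [i Y|i Y|i Y]; rewrite /b.
- by case: ifP => // _; apply: u_ge0.
- by case: ifP => // _; apply: u_ge0.
- by rewrite mul1r; case: ifP => [|_]; [apply: u_le_Hq | apply: Hq_ge0].
Qed.

(* Each agent gives utility >= 1/m to her favourite, which she draws with
   probability >= 1/(2 H_t); Cauchy-Schwarz then bounds the number of agents. *)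
Lemma agents_le : n%:R <= 2 * H * m%:R ^+ 2 * E.
Proof.
have m_gt0 : (0 < m)%N := leq_trans t_gt0 le_tm.
have m_pos : (0 : R) < m%:R by rewrite ltr0n.
set top := fun i => pi i (Ordinal m_gt0).
have top_first i : fpos (pi i) (top i) = 0%N by rewrite /top fpos_perm.
set b := fun i Y => if Y == top i then (m%:R : R)^-1 else 0.
have b_total : \sum_(i < n) \sum_(Y < m) b i Y = n%:R / m%:R.
  rewrite -[n in n%:R]card_ord -sumr_const -mulr_natl mulr1 mulr_suml.
  apply: eq_bigr => i _; rewrite mul1r (bigD1 (top i)) //= big1 => [|Y /negbTE ne].
    by rewrite /b eqxx addr0.
  by rewrite /b ne.
have b_ge0 i Y : 0 <= b i Y by rewrite /b; case: ifP; rewrite ?invr_ge0 ?ler0n.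
have b_le_u i Y : b i Y <= u i Y.
  rewrite /b; case: ifP => [/eqP->|_]; last exact: u_ge0.
  exact: (v_first_ge (u_sum1 i) (u_mono i) (top_first i)).
have b_le_q i Y : m%:R * b i Y <= 2 * H * q i Y.
  rewrite /b; case: ifP => [/eqP->|_]; last by rewrite mulr0 Hq_ge0.
  rewrite mulfV ?gt_eqF //.
  exact: (tth_p_first R Xh (@s_valid i) (pi_ext i) t_gt0 (top_first i)).
have := @sqr_mass_le m%:R b (ltW m_pos) b_ge0 b_le_u b_le_q; rewrite b_total.
have -> : m%:R * (n%:R / m%:R) ^+ 2 = n%:R * (n%:R / m%:R) :> R by field; rewrite gt_eqF.
have -> : 2 * H * n%:R * m%:R * E = n%:R * (2 * H * m%:R * E) by ring.
have -> : 2 * H * m%:R ^+ 2 * E = 2 * H * m%:R * E * m%:R by ring.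
by rewrite ler_pM2l ?ltr0n // ler_pdivrMr.
Qed.

(* Agents ranking X above the winner but outside their top t have their whole
   cutoff prefix (of length t) weakly above X. *)
Lemma low_SW_le X :
  t%:R * \sum_(i < n | (t <= fpos (pi i) X < fpos (pi i) Xh)%N) u i X <= M.
Proof.
rewrite mulr_sumr [X in _ <= X](bigID (fun i => (t <= fpos (pi i) X < fpos (pi i) Xh)%N)) /=.
rewrite -[X in X <= _]addr0 lerD //; last by apply: sumr_ge0 => i _; apply: mass_ge0.
apply: ler_sum => i /andP[le_tX lt_XXh].
have -> : c i = t by apply/minn_idPl; apply: ltnW (leq_ltn_trans le_tX lt_XXh).
exact: (mass_above_ge (u_mono i) le_tm le_tX).
Qed.

Lemma agents_t_le : n%:R * t%:R <= 2 * m%:R * M + 2 * m%:R * t%:R * SW u Xh.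
Proof.
have -> : n%:R * t%:R = \sum_(i < n) (t%:R : R) by rewrite sumr_const card_ord mulr_natl.
rewrite /M /SW !mulr_sumr -big_split /=; apply: ler_sum => i _.
exact: (mass_above_cutoff (u_ge0 i) (u_sum1 i) (u_mono i) Xh le_tm).
Qed.

(* Either the
   prefixes dominate (then square and use the Cauchy-Schwarz bound on M), or
   the winner's welfare does (then use SW(Xh) <= 2E). *)
Lemma agents_t2_le : n%:R * t%:R ^+ 2 <= 32 * H * m%:R ^+ 3 * E.
Proof.
have n_pos : (0 : R) < n%:R by rewrite ltr0n.
have t_pos : (0 : R) < t%:R by rewrite ltr0n.
have tm : (t%:R : R) <= m%:R by rewrite ler_nat.
have H1 := H_ge1; have E0 := E_ge0; have M0 : 0 <= M by apply: sumr_ge0 => i _; apply: mass_ge0.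
have W0 := SW_ge0 Xh; have W_le := winner_SW_le; have nt_le := agents_t_le.
have [prefix_dom|winner_dom] := lerP (n%:R * t%:R) (4 * m%:R * M).
  have sq : (n%:R * t%:R) ^+ 2 <= 16 * m%:R ^+ 2 * M ^+ 2.
    have -> : 16 * m%:R ^+ 2 * M ^+ 2 = (4 * m%:R * M) ^+ 2 :> R by ring.
    by rewrite ler_sqr ?nnegrE ?mulr_ge0 ?ler0n // ltW.
  have msq := sqr_prefix_mass_le.
  have : n%:R * (n%:R * t%:R ^+ 2) <= n%:R * (32 * H * m%:R ^+ 3 * E).
    have -> : n%:R * (n%:R * t%:R ^+ 2) = (n%:R * t%:R) ^+ 2 :> R by ring.
    apply: le_trans sq _.
    have -> : n%:R * (32 * H * m%:R ^+ 3 * E) = 16 * m%:R ^+ 2 * (2 * H * n%:R * m%:R * E) by ring.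
    by rewrite ler_wpM2l // mulr_ge0 // exprn_ge0 // ler0n.
  by rewrite ler_pM2l.
have nt_W : n%:R * t%:R <= 4 * m%:R * t%:R * SW u Xh by nra.
have n_le : n%:R <= 8 * m%:R * E.
  rewrite -(ler_pM2r t_pos); apply: le_trans nt_W _.
  have : 0 <= m%:R * t%:R :> R by rewrite mulr_ge0 ?ler0n.
  by nra.
have t2 : t%:R ^+ 2 <= m%:R ^+ 2 :> R by rewrite ler_sqr ?nnegrE ?ler0n.
have step1 := ler_wpM2r (exprn_ge0 2 (ltW t_pos)) n_le.
have step2 : 8 * m%:R * E * t%:R ^+ 2 <= 8 * m%:R * E * m%:R ^+ 2.
  by rewrite ler_wpM2l // !mulr_ge0 ?ler0n.
have m3E : 0 <= m%:R ^+ 3 * E by rewrite mulr_ge0 ?exprn_ge0 ?ler0n.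
have e : 8 * m%:R * E * m%:R ^+ 2 = 8 * (m%:R ^+ 3 * E) by ring.
rewrite e in step2.
have -> : 32 * H * m%:R ^+ 3 * E = 32 * H * (m%:R ^+ 3 * E) by ring.
by nra.
Qed.

Lemma SW_split X : SW u X =
  \sum_(i < n | (fpos (pi i) Xh <= fpos (pi i) X)%N) u i X
  + \sum_(i < n | (fpos (pi i) X < c i)%N) u i X
  + \sum_(i < n | (t <= fpos (pi i) X < fpos (pi i) Xh)%N) u i X.
Proof.
rewrite /SW (bigID (fun i => (fpos (pi i) Xh <= fpos (pi i) X)%N)) /= -addrA.
congr (_ + _); rewrite (bigID (fun i => (fpos (pi i) X < t)%N)) /=.
congr (_ + _); apply: eq_bigl => i; rewrite -ltnNge.
  by rewrite /c /cutoff leq_min andbC.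
by rewrite -leqNgt andbC.
Qed.

(* The target scale: each group of agents contributes O(K / t) to SW(X). *)
Let K : R := m%:R * Num.sqrt m%:R * H * E.

Lemma K_sqr : K ^+ 2 = m%:R ^+ 3 * H ^+ 2 * E ^+ 2.
Proof. by rewrite /K !exprMn sqr_sqrtr ?ler0n //; ring. Qed.

Lemma t_le_msqrtmH : t%:R <= m%:R * Num.sqrt m%:R * H.
Proof.
have m1 : 1 <= m%:R :> R by rewrite ler1n; apply: leq_trans t_gt0 le_tm.
have r1 : 1 <= Num.sqrt m%:R :> R by rewrite -[X in X <= _]sqrtr1 ler_sqrt ?ler0n.
have tm : t%:R <= m%:R :> R by rewrite ler_nat.
have H1 := H_ge1; have r0 : 0 <= Num.sqrt m%:R :> R by apply: sqrtr_ge0.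
have : m%:R <= m%:R * Num.sqrt m%:R :> R by rewrite ler_peMr // (le_trans ler01).
have : m%:R * Num.sqrt m%:R <= m%:R * Num.sqrt m%:R * H :> R.
  by rewrite ler_peMr // mulr_ge0 // (le_trans ler01).
by lra.
Qed.

Lemma partial_SW_le (P : pred 'I_n) X : \sum_(i < n | P i) u i X <= SW u X.
Proof.
rewrite /SW [X in _ <= X](bigID P) /= lerDl.
by apply: sumr_ge0 => i _; apply: u_ge0.
Qed.

Lemma K_ge0 : 0 <= K.
Proof. by rewrite /K !mulr_ge0 ?ler0n ?sqrtr_ge0 ?E_ge0 // ltW // H_gt0. Qed.

(* Agents ranking X weakly below the winner contribute at most SW(Xh) <= 2E. *)
Lemma below_winner_le X :
  t%:R * \sum_(i < n | (fpos (pi i) Xh <= fpos (pi i) X)%N) u i X <= 2 * K.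
Proof.
have le_W : \sum_(i < n | (fpos (pi i) Xh <= fpos (pi i) X)%N) u i X <= SW u Xh.
  apply: le_trans (partial_SW_le (fun i => (fpos (pi i) Xh <= fpos (pi i) X)%N) Xh).
  by apply: ler_sum => i; apply: (v_antitone (u_mono i)).
have W0 : 0 <= \sum_(i < n | (fpos (pi i) Xh <= fpos (pi i) X)%N) u i X.
  by apply: sumr_ge0 => i _; apply: u_ge0.
have := winner_SW_le; have := t_le_msqrtmH; have := E_ge0.
have : (0 : R) <= t%:R by rewrite ler0n.
rewrite /K; nra.
Qed.

(* Agents ranking X above their cutoff: square the bound of preferred_SW_le. *)
Lemma above_cutoff_le X :
  t%:R * \sum_(i < n | (fpos (pi i) X < c i)%N) u i X <= 8 * K.
Proof.
set W := \sum_(i < n | _) _.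
have W0 : 0 <= W by apply: sumr_ge0 => i _; apply: u_ge0.
have W2 : W ^+ 2 <= 2 * H * n%:R * E.
  apply: le_trans (preferred_SW_le X); rewrite expr2 ler_wpM2l //.
  exact: partial_SW_le.
have tW0 : 0 <= t%:R * W by rewrite mulr_ge0 ?ler0n.
have K8 : 0 <= 8 * K by rewrite mulr_ge0 ?K_ge0.
rewrite -ler_sqr ?nnegrE //.
have HE0 : 0 <= 2 * H * E by rewrite !mulr_ge0 ?E_ge0 // ltW // H_gt0.
apply: le_trans (_ : _ <= 2 * H * E * (n%:R * t%:R ^+ 2)) _.
  have -> : 2 * H * E * (n%:R * t%:R ^+ 2) = t%:R ^+ 2 * (2 * H * n%:R * E) by ring.
  by rewrite exprMn ler_wpM2l ?exprn_ge0 ?ler0n.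
have -> : (8 * K) ^+ 2 = 2 * H * E * (32 * H * m%:R ^+ 3 * E) by rewrite exprMn K_sqr; ring.
exact: (ler_wpM2l HE0 agents_t2_le).
Qed.

(* Agents ranking X above the winner but outside their top t: their utility
   for X is at most M / t, and M <= 2K by Cauchy-Schwarz and agents_le. *)
Lemma outside_top_le X :
  t%:R * \sum_(i < n | (t <= fpos (pi i) X < fpos (pi i) Xh)%N) u i X <= 2 * K.
Proof.
apply: le_trans (low_SW_le X) _.
have M0 : 0 <= M by apply: sumr_ge0 => i _; apply: mass_ge0.
have K2 : 0 <= 2 * K by rewrite mulr_ge0 ?K_ge0.
rewrite -ler_sqr ?nnegrE //.
apply: le_trans sqr_prefix_mass_le _.
have HmE0 : 0 <= 2 * H * m%:R * E by rewrite !mulr_ge0 ?ler0n ?E_ge0 // ltW // H_gt0.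
have -> : (2 * K) ^+ 2 = 2 * H * m%:R * E * (2 * H * m%:R ^+ 2 * E).
  by rewrite exprMn K_sqr; ring.
have -> : 2 * H * n%:R * m%:R * E = 2 * H * m%:R * E * n%:R by ring.
by rewrite ler_wpM2l // agents_le.
Qed.

Lemma SW_le_expected X : SW u X <= 12 * (m%:R * Num.sqrt m%:R * H / t%:R) * E.
Proof.
have t_pos : (0 : R) < t%:R by rewrite ltr0n.
have -> : 12 * (m%:R * Num.sqrt m%:R * H / t%:R) * E = 12 * K / t%:R.
  by rewrite /K; field; rewrite gt_eqF.
rewrite ler_pdivlMr // mulrC SW_split !mulrDr.
have := below_winner_le X; have := above_cutoff_le X; have := outside_top_le X.
by lra.
Qed.
End Aggregate.

Theorem mainTheorem13 (R : rcfType) :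
  exists C : R, 0 < C /\
  forall (n m t : nat), (0 < n)%N -> (1 <= t)%N -> (t <= m)%N ->
  forall g : topt_profile n m t -> 'I_m,
    metric_distortion_le g (6 * m%:R / t%:R + 1 : R) ->
  forall s : topt_profile n m t, valid_topt s ->
  forall u : 'I_n -> 'I_m -> R, is_utility u -> util_consistent s u ->
  forall X : 'I_m,
    SW u X <= C * (m%:R * Num.sqrt (m%:R) * harm t / t%:R) * expected_SW g s u.
Proof.
exists 12; split => // n m t n_gt0 t_gt0 le_tm g _ s s_valid u u_utility [pi [pi_ext u_mono]] X.
by apply: SW_le_expected.
Qed.
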